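(* Let $X=\{v_1,\dots,v_n\}$, let $w:X\to\mathbb{R}^+$, and let $g:2^X\to\mathbb{R}^+$ be monotone nondecreasing with $g(\emptyset)=0$. Let $\delta=\min\{g(C\cup\{v\})-g(C): C\subset X, v\in X\setminus C, g(C\cup\{v\})>g(C)\}$. Identify subsets of $X$ with vectors $\mathbf{x}\in\{0,1\}^n$ and define $f_1(\mathbf{x})=\left\lfloor \frac{g(X)-g(\mathbf{x})}{\delta}\right\rfloor\delta$ and $f_2(\mathbf{x})=w(\mathbf{x})=\sum_{x\in\mathbf{x}}w(x)$. Let $\beta=\left\lfloor\frac{g(X)-g(\emptyset)}{\delta}\right\rfloor$. Then throughout the run of GSEMO (as described in the context) on the bi-objective function $(f_1,f_2)$, the population satisfies $|P|\le\beta+1$.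
   Context: Both objectives are to be minimized. $\mathbf{x}'$ weakly dominates $\mathbf{x}$ ($\mathbf{x}'\succeq\mathbf{x}$) if $f_1(\mathbf{x}')\le f_1(\mathbf{x})$ and $f_2(\mathbf{x}')\le f_2(\mathbf{x})$; $\mathbf{x}'$ dominates $\mathbf{x}$ ($\mathbf{x}'\succ\mathbf{x}$) if additionally one of the inequalities is strict. GSEMO: start with population $P=\{\mathbf{0}\}$; in each iteration $t=1,\dots,T$, select $\mathbf{x}\in P$ uniformly at random, generate $\mathbf{x}'$ by flipping each bit of $\mathbf{x}$ independently with probability $1/n$; if no $\mathbf{z}\in P$ satisfies $\mathbf{z}\succ\mathbf{x}'$, set $P\leftarrow (P\setminus\{\mathbf{z}\in P:\mathbf{x}'\succeq\mathbf{z}\})\cup\{\mathbf{x}'\}$. At the end it returns $\arg\min\{f_2(\mathbf{x}):\mathbf{x}\in P, f_1(\mathbf{x})=0\}$ if such an individual exists. *)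

From HB Require Import structures.
From mathcomp Require Import all_boot all_order all_algebra.
Set Implicit Arguments. Unset Strict Implicit. Unset Printing Implicit Defensive.
Import Order.TTheory GRing.Theory Num.Theory.
Local Open Scope ring_scope.

(* Ground set X = 'I_n ; subsets of X = {set 'I_n} (= bit vectors in {0,1}^n). *)

Section GSEMO.
Variables (R : archiRealFieldType) (n : nat).
Variables (g : {set 'I_n} -> R) (w : 'I_n -> R) (delta : R).

Definition f1 (x : {set 'I_n}) : R :=
  (Num.floor ((g setT - g x) / delta))%:~R * delta.

Definition f2 (x : {set 'I_n}) : R := \sum_(i in x) w i.

Definition weakly_dominates (x' x : {set 'I_n}) : bool :=
  (f1 x' <= f1 x) && (f2 x' <= f2 x).
Definition dominates (x' x : {set 'I_n}) : bool :=
  weakly_dominates x' x && ((f1 x' < f1 x) || (f2 x' < f2 x)).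

Definition gsemo_update (P : {set {set 'I_n}}) (x' : {set 'I_n}) :
    {set {set 'I_n}} :=
  if [exists z in P, dominates z x'] then P
  else x' |: [set z in P | ~~ weakly_dominates x' z].

Definition flip (x F : {set 'I_n}) : {set 'I_n} := (x :\: F) :|: (F :\: x).

(* Populations that can occur during some run of GSEMO: start from {0};
   in each iteration some x in P is selected and some set F of bits is
   flipped (every F has positive probability under standard bit mutation). *)
Inductive gsemo_reachable : {set {set 'I_n}} -> Prop :=
| gsemo_init : gsemo_reachable [set set0]
| gsemo_step P x F : gsemo_reachable P -> x \in P ->
    gsemo_reachable (gsemo_update P (flip x F)).

End GSEMO.

Definition is_min_marginal_gain (R : archiRealFieldType) (n : nat)
    (g : {set 'I_n} -> R) (delta : R) : Prop :=
  (exists (C : {set 'I_n}) (v : 'I_n),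
      v \notin C /\ g C < g (v |: C) /\ delta = g (v |: C) - g C) /\
  (forall (C : {set 'I_n}) (v : 'I_n),
      v \notin C -> g C < g (v |: C) -> delta <= g (v |: C) - g C).

From Pilot Require Import Defs.
From mathcomp Require Import all_boot all_order all_algebra.
Set Implicit Arguments. Unset Strict Implicit. Unset Printing Implicit Defensive.
Import Order.TTheory GRing.Theory Num.Theory.
Local Open Scope ring_scope.

(* GSEMO only ever keeps mutually incomparable individuals: an offspring that
   is not dominated evicts everything it weakly dominates, and what remains
   cannot weakly dominate it either.  Since f2 is totally ordered, two
   incomparable individuals must differ in f1, and f1 takes at most
   beta + 1 values, namely k * delta with 0 <= k <= beta, because g is
   monotone and delta > 0. *)

Lemma card_le_of_injective_bounded (T : finType) (A : {pred T})
    (k : T -> nat) (b : nat) :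
  {in A &, injective k} -> (forall x, x \in A -> k x <= b)%N ->
  (#|A| <= b.+1)%N.
Proof.
move=> k_inj k_le; rewrite cardE -(size_map k) -(size_iota 0 b.+1).
apply: uniq_leq_size.
  by rewrite map_inj_in_uniq ?enum_uniq // => x y; rewrite !mem_enum; apply: k_inj.
move=> _ /mapP[x xA ->]; rewrite mem_enum in xA.
by rewrite mem_iota add0n ltnS k_le.
Qed.

Section Incomparability.
Variables (R : archiRealFieldType) (n : nat).
Variables (g : {set 'I_n} -> R) (w : 'I_n -> R) (delta : R).

Local Notation weakly_dominates := (weakly_dominates g w delta).
Local Notation dominates := (dominates g w delta).

Definition incomparable_population (P : {set {set 'I_n}}) : Prop :=
  {in P &, forall a b, a != b -> ~~ weakly_dominates a b}.

Lemma nondominating_weakly_dominates_sym (a b : {set 'I_n}) :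
  weakly_dominates a b -> ~~ dominates a b -> weakly_dominates b a.
Proof.
rewrite /dominates => ab; rewrite ab /= negb_or -!leNgt.
by move=> /andP[le1 le2]; rewrite /Defs.weakly_dominates le1 le2.
Qed.

Lemma incomparable_gsemo_update P x' :
  incomparable_population P ->
  incomparable_population (gsemo_update g w delta P x').
Proof.
move=> P_inc; rewrite /gsemo_update; case: ifPn => // /existsPn x'_nondom.
move=> a b; rewrite !in_setU1 !in_set.
case/orP=> [/eqP ->|/andP[aP x'_a]]; case/orP=> [/eqP ->|/andP[bP _]] //.
- by rewrite eqxx.
- move=> _; apply: contra x'_a => a_x'.
  by apply: nondominating_weakly_dominates_sym; have := x'_nondom a; rewrite aP.
- exact: P_inc.
Qed.

Lemma gsemo_reachable_incomparable P :
  gsemo_reachable g w delta P -> incomparable_population P.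
Proof.
elim=> [|Q x F _ Q_inc _]; last exact: incomparable_gsemo_update.
by move=> a b; rewrite !in_set1 => /eqP -> /eqP ->; rewrite eqxx.
Qed.

Lemma incomparable_f1_inj P :
  incomparable_population P -> {in P &, injective (f1 g delta)}.
Proof.
move=> P_inc x y xP yP f1xy; apply/eqP/negPn/negP => xy.
have := P_inc y x yP xP; rewrite eq_sym xy => /(_ isT).
move: (P_inc x y xP yP xy); rewrite /Defs.weakly_dominates f1xy lexx /=.
by case: leP => // /ltW ->.
Qed.

End Incomparability.

Section Levels.
Variables (R : archiRealFieldType) (n : nat).
Variables (g : {set 'I_n} -> R) (delta : R).
Hypothesis delta_gt0 : 0 < delta.
Hypothesis g_mono : forall A B : {set 'I_n}, A \subset B -> g A <= g B.

Definition f1_level (x : {set 'I_n}) : int :=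
  Num.floor ((g setT - g x) / delta).

Lemma f1E x : f1 g delta x = (f1_level x)%:~R * delta.
Proof. by []. Qed.

Lemma f1_level_ge0 x : 0 <= f1_level x.
Proof.
by rewrite floor_ge0 divr_ge0 ?(ltW delta_gt0) // subr_ge0 g_mono ?subsetT.
Qed.

Lemma incomparable_abs_f1_level_inj (w : 'I_n -> R) P :
  incomparable_population g w delta P ->
  {in P &, injective (fun x => `|f1_level x|%N)}.
Proof.
move=> /incomparable_f1_inj f1_inj x y xP yP /(congr1 Posz).
rewrite !gez0_abs ?f1_level_ge0 // => eq_level.
by apply: f1_inj; rewrite // !f1E eq_level.
Qed.

Lemma abs_f1_level_le x : (`|f1_level x| <= `|f1_level set0|)%N.
Proof.
rewrite -lez_nat !gez0_abs ?f1_level_ge0 //.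
apply/le_floor/ler_wpM2r; first by rewrite invr_ge0 ltW.
by rewrite lerD2l lerN2 g_mono ?sub0set.
Qed.

End Levels.

Lemma min_marginal_gain_gt0 (R : archiRealFieldType) (n : nat)
    (g : {set 'I_n} -> R) (delta : R) :
  is_min_marginal_gain g delta -> 0 < delta.
Proof. by case=> [[C [v [_ [gain ->]]]] _]; rewrite subr_gt0. Qed.

Theorem lemma1 (R : archiRealFieldType) (n : nat)
    (w : 'I_n -> R) (g : {set 'I_n} -> R) (delta : R)
    (hw : forall i, 0 < w i)
    (hg_nonneg : forall A, 0 <= g A)
    (hg_mono : forall A B : {set 'I_n}, A \subset B -> g A <= g B)
    (hg0 : g set0 = 0)
    (hdelta : is_min_marginal_gain g delta)
    (P : {set {set 'I_n}}) :
  gsemo_reachable g w delta P ->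
  (#|P| <= `|Num.floor ((g setT - g set0) / delta)|%N + 1)%N.
Proof.
move=> /gsemo_reachable_incomparable P_inc.
have delta_gt0 := min_marginal_gain_gt0 hdelta.
rewrite addn1; apply: (card_le_of_injective_bounded
  (incomparable_abs_f1_level_inj delta_gt0 hg_mono P_inc)).
by move=> x _; apply: abs_f1_level_le.
Qed.
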